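(* Let $t$ be a power of two, let $h:[u]\to[t]$ be a random hash function, let $S\subseteq[u]$ with $|S|<t$ be stored in a linear probing table of size $t$ using $h$, and let $q\in[u]$. Suppose that for each $\ell\in\{0,1,\dots,\log_2 t\}$ there is a number $P_\ell$ such that for every $y\in[t]$ and every $\ell$-interval $I$, \[\Pr\Big[\,|\{x\in S\setminus\{q\}: h(x)\in I\}|\ge \tfrac34 2^\ell \;\Big|\; h(q)=y\Big]\le P_\ell.\] Then the expected number of positions from $h(q)$ up to the first empty position at or after $h(q)$ (and hence the expected time to search, insert or delete $q$) is \[O\Big(1+\sum_{\ell=0}^{\log_2 t}2^\ell P_\ell\Big),\] where the constant in the $O$ is absolute.
   Context: Let $[s]=\{0,\dots,s-1\}$. Linear probing: a table of size $t$ with hash function $h:[u]\to[t]$; positions are indexed by nonnegative integers (wrap-around ignored), each either empty or holding one key. Keys of $S$ are inserted starting from an empty table; a key $x$ is inserted by scanning positions $h(x),h(x)+1,\dots$ and placing $x$ in the first empty one. Search, insertion and deletion of a key $x$ take time at most proportional to the number of positions from $h(x)$ to the first empty position at or after $h(x)$. For an integer $\ell\ge0$, an $\ell$-interval is a set of positions $[i2^\ell,(i+1)2^\ell)$ for an integer $i\ge0$. *)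

From HB Require Import structures.
From mathcomp Require Import all_boot all_order all_algebra.
Set Implicit Arguments. Unset Strict Implicit. Unset Printing Implicit Defensive.
Import Order.TTheory GRing.Theory Num.Theory.

(* ---------- Linear probing (positions are nats, no wrap-around) ---------- *)

(* Among the (size occ).+1 positions
   i, ..., i + size occ at least one is free, so the search range suffices. *)
Definition first_empty (occ : seq nat) (i : nat) : nat :=
  i + find (fun p => p \notin occ) (iota i (size occ).+1).

Definition lp_insert (u t : nat) (h : 'I_u -> 'I_t) (occ : seq nat) (x : 'I_u)
  : seq nat := rcons occ (first_empty occ (h x)).

Definition lp_table (u t : nat) (h : 'I_u -> 'I_t) (s : seq 'I_u) : seq nat :=
  foldl (lp_insert h) [::] s.

Definition probe_len (u t : nat) (h : 'I_u -> 'I_t) (s : seq 'I_u) (q : 'I_u)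
  : nat := first_empty (lp_table h s) (h q) - h q + 1.

Local Open Scope ring_scope.

Definition Pr (R : realFieldType) (T : finType) (mu : T -> R) (A : pred T) : R :=
  \sum_(w | A w) mu w.

Definition condPr (R : realFieldType) (T : finType) (mu : T -> R)
  (A B : pred T) : R := Pr mu (predI A B) / Pr mu B.

Definition expect (R : realFieldType) (T : finType) (mu : T -> R) (X : T -> nat)
  : R := \sum_w mu w * (X w)%:R.

Definition is_distr (R : realFieldType) (T : finType) (mu : T -> R) : Prop :=
  (forall w, 0 <= mu w) /\ \sum_w mu w = 1.

Definition load_in (u t : nat) (h : 'I_u -> 'I_t) (s : seq 'I_u) (q : 'I_u)
  (l i : nat) : nat :=
  count (fun x => (x != q) && (i * 2 ^ l <= h x < i.+1 * 2 ^ l)%N) s.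

From HB Require Import structures.
From mathcomp Require Import all_boot all_order all_algebra.
From mathcomp Require Import zify ring.
Import Order.TTheory GRing.Theory Num.Theory.

(* If the probe from [h q] runs for [D >= 8] steps, then [h q] lies in a
   maximal run of occupied positions [a, a + D).  Since position [a - 1] is
   free, every key stored in the run was hashed into it, so at least [D - 1]
   keys of [S \ {q}] hash into [a, a + D).  With [2 ^ l] the dyadic scale
   [8 2 ^ l <= D < 16 2 ^ l], these keys fall into at most [D / 2 ^ l + 2]
   consecutive [l]-intervals, one of which must then hold [3/4 2 ^ l] of
   them; all these intervals lie in a window of 35 [l]-intervals around
   [h q].  Hence the probe length is at most [8] plus [2 ^ (l + 4)] times
   the number of overloaded intervals in the windows, summed over [l].
   Taking expectations and conditioning on [h q], each overloaded indicator
   has expectation at most [P l]. *)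

Lemma first_empty_notin o i : first_empty o i \notin o.
Proof.
rewrite /first_empty; set free := (fun p => p \notin o).
have has_free : has free (iota i (size o).+1).
  apply/hasPn => all_in.
  have : size (iota i (size o).+1) <= size o.
    apply: (uniq_leq_size (iota_uniq _ _)) => p /all_in; exact: negbNE.
  by rewrite size_iota ltnn.
have := nth_find 0 has_free; rewrite nth_iota //.
by rewrite -[X in _ < X](size_iota i) -has_find.
Qed.

Lemma leq_first_empty o i : i <= first_empty o i.
Proof. exact: leq_addr. Qed.

Lemma mem_before_first_empty o i p : i <= p < first_empty o i -> p \in o.
Proof.
rewrite /first_empty => /andP [le_ip lt_pe].
have lt_find : p - i < find (fun p => p \notin o) (iota i (size o).+1) by lia.
have := before_find 0 lt_find.
have := find_size (fun p => p \notin o) (iota i (size o).+1).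
rewrite size_iota => le_find; rewrite nth_iota ?subnKC //; last lia.
by move/negbFE.
Qed.

Lemma exists_run_start (o : seq nat) y :
  exists a, [/\ a <= y, a = 0 \/ a.-1 \notin o & forall p, a <= p < y -> p \in o].
Proof.
elim: y => [|y [a [le_ay free_a run]]].
  by exists 0; split=> [||p]; [| left | lia].
case: (boolP (y \in o)) => y_in; last by exists y.+1; split=> [||p]; [| right | lia].
exists a; split=> [||p /andP [le_ap]]; [lia | by [] | rewrite ltnS leq_eqVlt].
by case/orP => [/eqP -> | lt_py] //; apply: run; rewrite le_ap.
Qed.

Section LinearProbing.
Context {u t : nat} (h : 'I_u -> 'I_t).

Lemma lp_table_rcons s x :
  lp_table h (rcons s x) = rcons (lp_table h s) (first_empty (lp_table h s) (h x)).
Proof. by rewrite /lp_table foldl_rcons. Qed.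

Lemma size_lp_table s : size (lp_table h s) = size s.
Proof.
elim/last_ind: s => [|s x IHs] //.
by rewrite lp_table_rcons !size_rcons IHs.
Qed.

(* A key hashed before [a] but stored at or after [a] would have probed the
   free position [a - 1]. *)
Lemma count_lp_table_le s a e : a = 0 \/ a.-1 \notin lp_table h s ->
  count (fun p => a <= p < e) (lp_table h s) <= count (fun x => a <= h x < e) s.
Proof.
elim/last_ind: s => [|s x IHs] //.
rewrite lp_table_rcons -!cats1 !count_cat /= !addn0 mem_cat negb_or => free_a.
set o := lp_table h s in IHs free_a *; set p := first_empty o (h x).
apply: leq_add; first by apply: IHs; case: free_a => [|/andP[]]; [left | right].
case: (boolP (a <= p < e)) => //= /andP [le_ap lt_pe].
have le_xp : h x <= p := leq_first_empty o (h x).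
rewrite (leq_ltn_trans le_xp lt_pe) andbT leqNgt; apply/negP => lt_xa.
have : a.-1 \in o by apply: (mem_before_first_empty _ (h x)); lia.
by case: free_a => [|/andP[/negP]]; [lia | ].
Qed.

(* [[a, a + D)] is the maximal occupied run through [h q], ending just before
   the first empty position; the [1 +] accounts for [q] itself. *)
Lemma probe_run s q : uniq s ->
  exists a D, [/\ a <= h q <= a + D, probe_len h s q <= D.+1, D <= size s
                & D <= 1 + count (fun x => (x != q) && (a <= h x < a + D)) s].
Proof.
move=> uniq_s; set o := lp_table h s; set y := nat_of_ord (h q).
set e := first_empty o y; have le_ye : y <= e := leq_first_empty o y.
have [a [le_ay free_a run_ay]] := exists_run_start o y.
have run_ae : forall p, a <= p < e -> p \in o.
  move=> p /andP [le_ap lt_pe]; case: (ltnP p y) => [lt_py | le_yp].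
    by apply: run_ay; rewrite le_ap.
  by apply: (mem_before_first_empty _ y); rewrite le_yp.
have full_run : e - a <= count (fun p => a <= p < e) o.
  rewrite -size_filter -(size_iota a (e - a)).
  apply: (uniq_leq_size (iota_uniq _ _)) => p; rewrite mem_iota mem_filter => p_in.
  by rewrite run_ae; lia.
have count_q : count (pred1 q) s <= 1 by rewrite count_uniq_mem //; case: (q \in s).
have keys_run : count (fun x => a <= h x < e) s <=
                count (pred1 q) s + count (fun x => (x != q) && (a <= h x < e)) s.
  by elim: (s) => //= x s' IHs; case: eqVneq => /= _; lia.
exists a, (e - a); rewrite subnKC; last lia.
split; [lia | rewrite /probe_len -/o -/y -/e; lia | | ].
  by apply: leq_trans full_run _; rewrite -(size_lp_table s) count_size.
apply: leq_trans full_run (leq_trans (count_lp_table_le s a e free_a) _).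
by apply: leq_trans keys_run _; rewrite leq_add2r.
Qed.

End LinearProbing.

Section CountRanges.
Context {T : Type} (P : pred T) (f : T -> nat).

Lemma count_range_split lo mid hi s : lo <= mid <= hi ->
  count (fun x => P x && (lo <= f x < hi)) s =
  count (fun x => P x && (lo <= f x < mid)) s
  + count (fun x => P x && (mid <= f x < hi)) s.
Proof. by move=> mid_in; elim: s => //= x s ->; case: (P x) => /=; lia. Qed.

Lemma count_range_blocks c m N s :
  count (fun x => P x && (c * m <= f x < (c + N) * m)) s =
  \sum_(j < N) count (fun x => P x && ((c + j) * m <= f x < (c + j).+1 * m)) s.
Proof.
elim: N => [|N IHN].
  by rewrite big_ord0 addn0; elim: s => //= x s ->; case: (P x) => /=; lia.
rewrite big_ord_recr /= -IHN (count_range_split _ ((c + N) * m)) ?addnS //.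
by rewrite !leq_mul2r leq_addr leqnSn !orbT.
Qed.

(* Pigeonhole: otherwise the [D / m + 2] blocks covering [[a, a + D)] hold
   fewer than [3 m / 4] points each, hence fewer than [D - 1] in total. *)
Lemma exists_heavy_block s a D m : 8 * m <= D ->
  D <= 1 + count (fun x => P x && (a <= f x < a + D)) s ->
  exists2 j, j < D %/ m + 2 &
    3 * m <= 4 * count (fun x => P x && ((a %/ m + j) * m <= f x < (a %/ m + j).+1 * m)) s.
Proof.
case: (posnP m) => [-> _ _ | m_gt0]; first by exists 0; rewrite ?muln0.
move=> le_8mD loaded; set i0 := a %/ m; set N := D %/ m + 2.
set L := fun j => count (fun x => P x && ((i0 + j) * m <= f x < (i0 + j).+1 * m)) s.
case: (boolP [exists j : 'I_N, 3 * m <= 4 * L j]) => [/existsP [j heavy] | ].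
  by exists j.
move=> /existsPn all_light; exfalso.
have sum_light : \sum_(j < N) (4 * L j + 1) <= N * (3 * m).
  rewrite -[N in N * _]card_ord -sum_nat_const.
  by apply: leq_sum => j _; rewrite addn1 ltnNge all_light.
have cover : count (fun x => P x && (a <= f x < a + D)) s <= \sum_(j < N) L j.
  rewrite -count_range_blocks; apply: sub_count => x /andP [-> /andP [le_ax lt_xD]].
  have := leq_divM a m; have := ltn_ceil a m_gt0; have := ltn_ceil D m_gt0.
  rewrite /N /i0 => *; apply/andP; split; nia.
have := leq_divM D m; have : 8 <= D %/ m by rewrite leq_divRL.
move: sum_light cover loaded; rewrite big_split /= sum1_card card_ord -big_distrr /=.
move: (\sum_(j < N) L j) (D %/ m) => S n; rewrite /N; nia.
Qed.
End CountRanges.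

Lemma exists_dyadic_scale D : 8 <= D -> exists l, 8 * 2 ^ l <= D < 16 * 2 ^ l.
Proof.
move=> le_8D; have tl_ge3 : 3 <= trunc_log 2 D by apply: trunc_log_max.
exists (trunc_log 2 D - 3).
have := trunc_log_bounds (isT : 1 < 2) (leq_trans (isT : 0 < 8) le_8D).
rewrite /= -(subnKC tl_ge3) expnS expnD addKn; lia.
Qed.

Definition overloaded {u t : nat} (h : 'I_u -> 'I_t) (s : seq 'I_u) (q : 'I_u) (l i : nat)
  : bool := 3 * 2 ^ l <= 4 * load_in h s q l i.

(* The run found by [probe_run] meets only [l]-intervals among the 35 starting
   at index [h q %/ 2 ^ l - 17]; this index is truncated at [0]. *)
Lemma probe_len_le_overloaded u t k (h : 'I_u -> 'I_t) s q :
  uniq s -> size s < 2 ^ k ->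
  probe_len h s q <= 8 + \sum_(l < k.+1) 2 ^ (l + 4) *
     \sum_(j < 35) overloaded h s q l (h q %/ 2 ^ l - 17 + j).
Proof.
move=> uniq_s small_s.
have [a [D [/andP [le_ay le_yD] probe_le D_le loaded]]] := probe_run h s q uniq_s.
case: (ltnP D 8) => [lt_D8 | le_8D]; first lia.
have [l /andP [lo_D hi_D]] := exists_dyadic_scale _ le_8D; set m := 2 ^ l in lo_D hi_D.
have m_gt0 : 0 < m by rewrite expn_gt0.
have lt_lk : l < k.+1.
  have : 2 ^ l < 2 ^ k by rewrite -/m; lia.
  by rewrite ltn_exp2l // => /ltnW.
have [j lt_jN heavy] :=
  exists_heavy_block (fun x => x != q) (fun x => nat_of_ord (h x)) _ _ _ _ lo_D loaded.
set i0 := a %/ m in lt_jN heavy; set Y := h q %/ m.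
have le_i0Y : i0 <= Y by apply: leq_div2r.
have lt_Yi0 : Y < i0 + 17.
  rewrite /Y ltn_divLR //; have := ltn_ceil a m_gt0; rewrite -/i0; nia.
have lt_j17 : j < 17.
  have : D %/ m < 16 by rewrite ltn_divLR // mulnC.
  lia.
have lt_j35 : i0 + j - (Y - 17) < 35 by lia.
apply: leq_trans (leq_addl 8 _).
rewrite (bigD1 (Ordinal lt_lk)) //=; apply: leq_trans (leq_addr _ _).
rewrite (bigD1 (Ordinal lt_j35)) //= -/m -/Y.
have -> : Y - 17 + (i0 + j - (Y - 17)) = i0 + j by lia.
rewrite /overloaded heavy expnD -/m; lia.
Qed.

Local Open Scope ring_scope.

Section Expectation.
Context {R : realFieldType} {T : finType} (mu : T -> R).

Lemma expectD (X Y : T -> nat) :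
  expect mu (fun w => X w + Y w)%N = expect mu X + expect mu Y.
Proof. by rewrite /expect -big_split; apply: eq_bigr => w _; rewrite natrD mulrDr. Qed.

Lemma expect_sum (I : Type) (r : seq I) (P : pred I) (X : I -> T -> nat) :
  expect mu (fun w => \sum_(i <- r | P i) X i w)%N
  = \sum_(i <- r | P i) expect mu (X i).
Proof.
rewrite /expect exchange_big; apply: eq_bigr => w _.
by rewrite natr_sum mulr_sumr.
Qed.

Lemma expectMn (c : nat) (X : T -> nat) :
  expect mu (fun w => c * X w)%N = c%:R * expect mu X.
Proof. by rewrite /expect mulr_sumr; apply: eq_bigr => w _; rewrite natrM mulrCA. Qed.

Lemma expect_cst (c : nat) : is_distr mu -> expect mu (fun _ => c) = c%:R.
Proof. by case=> _ mu1; rewrite /expect -mulr_suml mu1 mul1r. Qed.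

Lemma expect_indicator (A : pred T) : expect mu (fun w => nat_of_bool (A w)) = Pr mu A.
Proof. by rewrite /Pr big_mkcond; apply: eq_bigr => w _; case: (A w); rewrite ?mulr1 ?mulr0. Qed.

Lemma ler_expect (X Y : T -> nat) : (forall w, 0 <= mu w) ->
  (forall w, X w <= Y w)%N -> expect mu X <= expect mu Y.
Proof. by move=> mu_ge0 le_XY; apply: ler_sum => w _; rewrite ler_wpM2l ?ler_nat. Qed.

Lemma Pr_ge0 (A : pred T) : (forall w, 0 <= mu w) -> 0 <= Pr mu A.
Proof. by move=> mu_ge0; apply: sumr_ge0. Qed.

Lemma Pr_predI_le (A B : pred T) : (forall w, 0 <= mu w) -> Pr mu (predI A B) <= Pr mu B.
Proof.
move=> mu_ge0; rewrite /Pr [X in _ <= X]big_mkcond [X in X <= _]big_mkcond.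
by apply: ler_sum => w _ /=; case: (A w); case: (B w).
Qed.

Lemma Pr_partition {Y : finType} (g : T -> Y) (A : pred T) :
  Pr mu A = \sum_y Pr mu (predI A (fun w => g w == y)).
Proof. exact: partition_big. Qed.

(* Total probability: a bound on each conditional probability given [g = y]
   bounds the probability of the event read at [y = g w]. *)
Lemma Pr_le_condPr {Y : finType} (g : T -> Y) (A : Y -> pred T) (p : R) :
  is_distr mu ->
  (forall y, 0 < Pr mu (fun w => g w == y) ->
     condPr mu (A y) (fun w => g w == y) <= p) ->
  Pr mu (fun w => A (g w) w) <= p.
Proof.
move=> [mu_ge0 mu1] condP.
have total : \sum_y Pr mu (fun w => g w == y) = 1.
  by rewrite -mu1 [RHS](Pr_partition g predT).
rewrite (Pr_partition g) -[p]mulr1 -total mulr_sumr; apply: ler_sum => y _.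
have -> : Pr mu (predI (fun w => A (g w) w) (fun w => g w == y))
          = Pr mu (predI (A y) (fun w => g w == y)).
  by apply: eq_bigl => w /=; case: eqP => [-> | _]; rewrite ?andbF.
have [gy_gt0 | gy_le0] := ltrP 0 (Pr mu (fun w => g w == y)).
  by have := condP y gy_gt0; rewrite /condPr ler_pdivrMr // mulrC.
have gy0 : Pr mu (fun w => g w == y) = 0 by apply/eqP; rewrite eq_le gy_le0 Pr_ge0.
by rewrite gy0 mulr0 -gy0 Pr_predI_le.
Qed.

End Expectation.

Theorem theorem4 :
  exists C : nat,
  forall (R : realFieldType) (u k : nat)
         (mu : {ffun 'I_u -> 'I_(2 ^ k)} -> R)
         (s : seq 'I_u) (q : 'I_u) (P : nat -> R),
    is_distr mu ->
    uniq s ->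
    (size s < 2 ^ k)%N ->
    (forall (l : nat), (l <= k)%N ->
       forall (y : 'I_(2 ^ k)) (i : nat),
         0 < Pr mu (fun h => h q == y) ->
         condPr mu
           (fun h => (3 * 2 ^ l <= 4 * load_in h s q l i)%N)
           (fun h => h q == y) <= P l) ->
    expect mu (fun h => probe_len h s q)
      <= C%:R * (1 + \sum_(l < k.+1) 2%:R ^+ l * P l).
Proof.
exists 560%N => R u k mu s q P distr uniq_s small_s condP.
have [mu_ge0 _] := distr.
have overloaded_Pr (l : 'I_k.+1) (j : nat) :
    Pr mu (fun h => overloaded h s q l (h q %/ 2 ^ l - 17 + j)) <= P l.
  apply: (Pr_le_condPr mu (fun h => h q)
    (fun y h => overloaded h s q l (y %/ 2 ^ l - 17 + j))) => // y.
  exact: condP (ltn_ord l) y _.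
apply: le_trans (ler_expect _ _ _ mu_ge0
  (fun h => probe_len_le_overloaded _ _ _ h s q uniq_s small_s)) _.
rewrite expectD expect_cst // expect_sum.
apply: (@le_trans _ _ (8%:R + \sum_(l < k.+1) (2 ^ (l + 4))%:R * (35%:R * P l))).
  rewrite lerD2l; apply: ler_sum => l _; rewrite expectMn expect_sum ler_wpM2l //.
  apply: (@le_trans _ _ (\sum_(j < 35) P l)); last by rewrite sumr_const card_ord mulr_natl.
  by apply: ler_sum => j _; rewrite expect_indicator.
rewrite mulrDr mulr1 mulr_sumr lerD ?ler_nat //; apply: ler_sum => l _.
by rewrite expnD natrM natrX le_eqVlt; apply/orP; left; apply/eqP; ring.
Qed.
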